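(* Let $k \geq 3$ and let $F$ be a $k$-edge graph with $\gamma(F)=1$. Let $\Gamma_1$ be a pure $(m_1,F)$-special graph and $\Gamma_2$ a pure $(m_2,F)$-special graph with $V(\Gamma_1)\cap V(\Gamma_2) = \emptyset$. Let $x \in V(\Gamma_1)$, $y \in V(\Gamma_2)$, let $\Gamma$ be the graph with vertex set $V(\Gamma_1)\cup V(\Gamma_2)$ and edge set $E(\Gamma_1)\cup E(\Gamma_2)\cup\{xy\}$, and let $m = |E(\Gamma)|$. If $\iota(\Gamma,F) = \frac{m+1}{k+2}$, then $\Gamma$ is an $(m,F)$-special graph.
   Context: All graphs are finite and simple. For $D \subseteq V(G)$, $N_G[D]$ is the closed neighbourhood of $D$. A set $D \subseteq V(G)$ is an $F$-isolating set of $G$ if $G - N_G[D]$ contains no subgraph isomorphic to $F$; $\iota(G,F)$ is the minimum size of such a set. $\gamma(F)=1$ means $F$ has a vertex adjacent to all other vertices of $F$. ($m,F$)-special graphs: let $F$ be a connected $k$-edge graph. Write $m+1 = q(k+2)+r$ with integers $q \ge 0$, $0 \le r \le k+1$. If $q = 0$, an $(m,F)$-special graph is any connected $m$-edge graph. If $q \geq 1$, take distinct vertices $v_1,\dots,v_q$, copies $F_1,\dots,F_q$ of $F$ such that $V(F_1),\dots,V(F_q),\{v_1,\dots,v_q\}$ are pairwise disjoint, vertices $w_i \in V(F_i)$, and let $G_i$ be the graph with vertex set $\{v_i\}\cup V(F_i)$ and edge set $E(F_i)\cup\{v_iw_i\}$. Let $T$ be a tree with vertex set $\{v_1,\dots,v_q\}$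 (the quotient graph) and $T'$ a connected $r$-edge graph with $V(T') \cap \bigcup_i V(G_i) = \{v_q\}$ (the remainder graph). The graph with vertex set $V(T')\cup\bigcup_i V(G_i)$ and edge set $E(T)\cup E(T')\cup \bigcup_i E(G_i)$ is an $(m,F)$-special graph. It is pure if $q\ge1$ and $T'$ has no edges (so $m+1=q(k+2)$). *)

From mathcomp Require Import all_boot.
Set Implicit Arguments. Unset Strict Implicit. Unset Printing Implicit Defensive.

(* A finite simple graph inside an ambient finite type T is a pair (V, E):
   V : {set T} is the vertex set, E : {set {set T}} the edge set, each edge
   being a 2-element subset of V. *)

Section Graphs.
Variable T : finType.

Definition is_graph (V : {set T}) (E : {set {set T}}) : Prop :=
  forall e, e \in E -> #|e| = 2 /\ e \subset V.

Definition eadj (E : {set {set T}}) : rel T := fun x y => [set x; y] \in E.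

Definition connected (V : {set T}) (E : {set {set T}}) : Prop :=
  V != set0 /\ {in V &, forall x y, connect (eadj E) x y}.

Definition tree (V : {set T}) (E : {set {set T}}) : Prop :=
  is_graph V E /\ connected V E /\ forall e, e \in E -> ~ connected V (E :\ e).

Definition closed_nbhd (E : {set {set T}}) (D : {set T}) : {set T} :=
  D :|: [set u | [exists d in D, [set u; d] \in E]].
End Graphs.

Section FGraphs.
Variables (TF T : finType) (VF : {set TF}) (EF : {set {set TF}}).

(* the graph with vertex set W (and edges E restricted to W) contains a
   subgraph isomorphic to F = (VF, EF) *)
Definition contains_copy (W : {set T}) (E : {set {set T}}) : bool :=
  [exists f : {ffun TF -> T},
     [&& [forall a in VF, f a \in W],
         [forall a in VF, forall b in VF, (f a == f b) ==> (a == b)]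
       & [forall e in EF, (f @: e) \in E]]].

Definition isolating (V : {set T}) (E : {set {set T}}) (D : {set T}) : bool :=
  (D \subset V) && ~~ contains_copy (V :\: closed_nbhd E D) E.

(* iota(G, F): minimum size of an F-isolating set (V itself is a candidate
   whenever F has a vertex, and #|V| is used as default value) *)
Definition iotaF (V : {set T}) (E : {set {set T}}) : nat :=
  \big[minn/#|V|]_(D : {set T} | isolating V E D) #|D|.

Definition gamma_one : bool :=
  [exists c in VF, forall u in VF, (u != c) ==> ([set c; u] \in EF)].

(* The (m,F)-special construction with parameters q >= 1 and r
   (vertices v_0..v_{q-1}, copies F_i of F with vertex sets Vc i given by
   embeddings fc i, attachment vertices w i, quotient tree (Vv, ET),
   remainder graph (VR, ER) meeting the G_i only in v_{q-1}). *)
Definition special_constr (q r : nat) (V : {set T}) (E : {set {set T}}) : Prop :=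
  exists (v : nat -> T) (fc : nat -> TF -> T) (w : nat -> T)
         (ET : {set {set T}}) (VR : {set T}) (ER : {set {set T}}),
    let Vc := fun i => fc i @: VF in
    let Ec := fun i => [set fc i @: e | e : {set TF} in EF] in
    let Vv := [set v (nat_of_ord i) | i : 'I_q] in
    let VG := \bigcup_(i < q) (v i |: Vc i) in
    [/\ [/\ 0 < q,
            forall i j, i < q -> j < q -> v i = v j -> i = j,
            forall i, i < q -> {in VF &, injective (fc i)} /\ w i \in Vc i,
            forall i j, i < q -> j < q -> i != j -> [disjoint Vc i & Vc j]
          & forall i j, i < q -> j < q -> v i \notin Vc j],
        tree Vv ET,
        [/\ is_graph VR ER, connected VR ER, #|ER| = r
          & VR :&: VG = [set v q.-1]],
        V = VR :|: VG
      & E = ET :|: ER :|: \bigcup_(i < q) (Ec i :|: [set [set v i; w i]])].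

Definition special (m : nat) (V : {set T}) (E : {set {set T}}) : Prop :=
  let q := (m.+1 %/ (#|EF| + 2))%N in
  let r := (m.+1 %% (#|EF| + 2))%N in
  if q == 0 then is_graph V E /\ connected V E /\ #|E| = m
  else special_constr q r V E.

(* pure (m,F)-special graph: q >= 1 and the remainder graph has no edges *)
Definition pure_special (m : nat) (V : {set T}) (E : {set {set T}}) : Prop :=
  let q := (m.+1 %/ (#|EF| + 2))%N in
  let r := (m.+1 %% (#|EF| + 2))%N in
  [/\ 0 < q, r = 0 & special_constr q 0 V E].
End FGraphs.

(* A pure special graph with q blocks has at least q (k + 2) - 1 edges, so
   iota(Gamma) (k + 2) = m + 1 forces iota(Gamma) >= q1 + q2, while the quotient
   vertices of Gamma_1 and Gamma_2 always isolate F; hence iota(Gamma) = q1 + q2.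
   If x were not a quotient vertex of Gamma_1, then either Gamma_1 - x has an
   F-isolating set of size < q1, which together with an isolating set of Gamma_2
   of size <= q2 containing y (hence dominating x) would isolate Gamma, or
   q1 = 1 and Gamma_1 - x is a copy of F, so that x can be taken as the quotient
   vertex instead.  With x and y quotient vertices, joining the two quotient
   trees along xy exhibits Gamma as a pure (m, F)-special graph.  Isolation is
   local because F has a dominating vertex: every copy of F lies in the closed
   neighbourhood of one vertex, so it cannot use the bridge xy, nor survive in
   a copy of F that misses a vertex. *)

From mathcomp Require Import all_boot zify.
Set Implicit Arguments. Unset Strict Implicit. Unset Printing Implicit Defensive.

Lemma connect_homo (T T' : finType) (e : rel T) (e' : rel T') (p : T -> T') :
  (forall a b, e a b -> connect e' (p a) (p b)) ->
  forall a b, connect e a b -> connect e' (p a) (p b).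
Proof.
move=> pe a b /connectP [s es ->]; elim: s a es => [|c s IHs] a /=.
  by rewrite connect0.
by case/andP => /pe eac /IHs; apply: connect_trans.
Qed.

Lemma eadjC (T : finType) (E : {set {set T}}) : symmetric (eadj E).
Proof. by move=> a b; rewrite /eadj setUC. Qed.

Lemma connect_eadj_sym (T : finType) (E : {set {set T}}) : connect_sym (eadj E).
Proof. exact/sym_connect_sym/eadjC. Qed.

Lemma connect_eadj0 (T : finType) (a b : T) :
  connect (eadj (set0 : {set {set T}})) a b -> a = b.
Proof. by case/connectP => [[|c s]] /= => [_ ->|]; rewrite // /eadj inE. Qed.

Lemma connect_eadjS (T : finType) (E E' : {set {set T}}) :
  E \subset E' -> subrel (connect (eadj E)) (connect (eadj E')).
Proof. by move=> sEE'; apply: connect_sub => a b ab; apply/connect1/(subsetP sEE'). Qed.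

Section Distance.
Variables (T : finType) (E : {set {set T}}) (r : T).

Fixpoint ball n : {set T} :=
  if n is n'.+1 then ball n' :|: [set u | [exists w in ball n', eadj E w u]]
  else [set r].

Lemma ball_path a p n :
  path (eadj E) a p -> a \in ball n -> last a p \in ball (n + size p).
Proof.
elim: p a n => [|b p IHp] a n /=; first by rewrite addn0.
case/andP => ab bp an; rewrite addnS -addSn; apply: IHp => //=.
by rewrite inE; apply/orP; right; rewrite inE; apply/existsP; exists a; rewrite an.
Qed.

Lemma dist_exists u : exists n, (u \in ball n) || ~~ connect (eadj E) r u.
Proof.
case: (boolP (connect _ r u)) => [/connectP [p rp ->] | _]; last by exists 0; rewrite orbT.
by exists (0 + size p); rewrite (ball_path rp) // set11.
Qed.

(* Junk value [0] outside the connected component of [r]. *)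
Definition dist u := ex_minn (dist_exists u).

Lemma dist_le u n : u \in ball n -> dist u <= n.
Proof. by rewrite /dist; case: ex_minnP => d _ min_d un; apply: min_d; rewrite un. Qed.

Lemma dist_pred u :
  connect (eadj E) r u -> u != r -> exists w, eadj E w u && (dist w < dist u).
Proof.
move=> ru ur; rewrite /dist; case: ex_minnP => d; rewrite ru orbF => ud min_d.
case: d ud min_d => [|d] ud min_d; first by move: ud; rewrite inE (negbTE ur).
case/setUP: ud => [ud|]; first by have := min_d d; rewrite ud ltnn => /(_ isT).
rewrite inE => /existsP [w /andP [wd wu]]; exists w; rewrite wu /=.
by rewrite ltnS; apply: dist_le.
Qed.
End Distance.

(* Each vertex other than [r] is sent injectively to an edge towards a vertex
   closer to [r]. *)
Lemma connected_card_le (T : finType) (V : {set T}) (E : {set {set T}}) :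
  connected V E -> #|V| <= #|E| + 1.
Proof.
case=> /set0Pn [r Vr] connV.
pose par u := odflt u [pick w | eadj E w u && (dist E r w < dist E r u)].
have parP u : u \in V :\ r -> eadj E (par u) u && (dist E r (par u) < dist E r u).
  case/setD1P => ur Vu; rewrite /par; case: pickP => [w //|none] /=.
  by have [w] := dist_pred (connV r u Vr Vu) ur; rewrite none.
have inj_edge : {in V :\ r &, injective (fun u => [set u; par u])}.
  move=> u1 u2 u1V u2V eq12; apply/eqP/negPn/negP => u12.
  have /andP [_ lt1] := parP _ u1V; have /andP [_ lt2] := parP _ u2V.
  have : u1 \in [set u2; par u2] by rewrite -eq12 set21.
  have : u2 \in [set u1; par u1] by rewrite eq12 set21.
  rewrite !inE eq_sym (negbTE u12) /= => /eqP p1 /eqP p2.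
  by move: lt1 lt2; rewrite -p1 -p2 => lt1 /(ltn_trans lt1); rewrite ltnn.
rewrite (cardsD1 r V) Vr add1n addn1 ltnS -(card_in_imset inj_edge).
apply/subset_leq_card/subsetP => _ /imsetP [u uV ->].
by have /andP [+ _] := parP _ uV; rewrite /eadj setUC.
Qed.

Section ClosedNbhd.
Variables (T : finType) (E : {set {set T}}).

Lemma closed_nbhdP (D : {set T}) u :
  reflect (u \in D \/ exists2 d, d \in D & [set u; d] \in E) (u \in closed_nbhd E D).
Proof.
rewrite /closed_nbhd !inE.
apply: (iffP orP) => [[|/existsP [d /andP [Dd ud]]]|[|[d Dd ud]]]; try by left.
  by right; exists d.
by right; apply/existsP; exists d; rewrite Dd.
Qed.

Lemma subset_closed_nbhd (D : {set T}) : D \subset closed_nbhd E D.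
Proof. by apply/subsetP => u Du; apply/closed_nbhdP; left. Qed.

Lemma closed_nbhd_edge (D : {set T}) d u :
  d \in D -> [set u; d] \in E -> u \in closed_nbhd E D.
Proof. by move=> Dd ud; apply/closed_nbhdP; right; exists d. Qed.

Lemma closed_nbhd0 : closed_nbhd E set0 = set0.
Proof. by apply/setP => u; rewrite [RHS]inE; apply/negP => /closed_nbhdP [|[d]]; rewrite inE. Qed.
End ClosedNbhd.

Lemma closed_nbhdS (T : finType) (E E' : {set {set T}}) (D D' : {set T}) :
  E \subset E' -> D \subset D' -> closed_nbhd E D \subset closed_nbhd E' D'.
Proof.
move=> sEE' sDD'; apply/subsetP => u /closed_nbhdP [Du|[d Dd ud]].
  exact/closed_nbhdP/or_introl/(subsetP sDD').
by apply: (closed_nbhd_edge (subsetP sDD' _ Dd)); apply: (subsetP sEE').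
Qed.

Lemma iotaF_le_card (T TF : finType) (VF : {set TF}) (EF : {set {set TF}})
    (V : {set T}) (E : {set {set T}}) (D : {set T}) :
  isolating VF EF V E D -> iotaF VF EF V E <= #|D|.
Proof.
move=> isoD; rewrite /iotaF.
have : D \in index_enum {set T} by rewrite mem_index_enum.
elim: (index_enum _) => [//|a r IHr]; rewrite big_cons inE.
case/orP => [/eqP <-|Dr]; first by rewrite isoD geq_minl.
by case: ifP => _; [apply: leq_trans (geq_minr _ _) (IHr Dr)|apply: IHr].
Qed.

Lemma tree_edge_ends (T : finType) (C : {set T}) (EC : {set {set T}}) a b :
  tree C EC -> [set a; b] \in EC -> (a \in C) && (b \in C).
Proof. by case=> graphC _ /graphC [_ /subsetP sub]; rewrite !sub // !inE eqxx ?orbT. Qed.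

Section TreeJoin.
Variables (T : finType) (A B : {set T}) (EA EB : {set {set T}}) (x y : T).
Hypotheses (treeA : tree A EA) (treeB : tree B EB) (disjAB : [disjoint A & B]).
Hypotheses (Ax : x \in A) (By : y \in B).

Let E := EA :|: EB :|: [set [set x; y]].

Lemma join_graph : is_graph (A :|: B) E.
Proof.
have [[graphA _] [graphB _]] := (treeA, treeB).
move=> e; rewrite !inE => /orP [/orP [/graphA|/graphB]|/eqP ->].
- by case=> ? sub; split=> //; apply: subset_trans sub (subsetUl _ _).
- by case=> ? sub; split=> //; apply: subset_trans sub (subsetUr _ _).
have xy : x != y by apply: contraTneq By => <-; rewrite (disjointFr disjAB Ax).
rewrite cards2 xy; split=> //; apply/subsetP => u /set2P [] ->.
  by rewrite inE Ax.
by rewrite inE By orbT.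
Qed.

Lemma join_connected : connected (A :|: B) E.
Proof.
have [[_ [[_ connA] _]] [_ [[_ connB] _]]] := (treeA, treeB).
split; first by apply/set0Pn; exists x; rewrite inE Ax.
have inA a b : a \in A -> b \in A -> connect (eadj E) a b.
  by move=> Aa Ab; apply: connect_eadjS (connA _ _ Aa Ab); rewrite /E -setUA subsetUl.
have inB a b : a \in B -> b \in B -> connect (eadj E) a b.
  move=> Ba Bb; apply: connect_eadjS (connB _ _ Ba Bb).
  by rewrite /E (setUC EA) -setUA subsetUl.
have xy : connect (eadj E) x y by apply: connect1; rewrite /eadj /E !inE eqxx orbT.
have yx : connect (eadj E) y x by rewrite connect_eadj_sym.
move=> a b; rewrite !inE => /orP [Aa|Ba] /orP [Ab|Bb].
- exact: inA.
- exact: connect_trans (inA _ _ Aa Ax) (connect_trans xy (inB _ _ By Bb)).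
- exact: connect_trans (inB _ _ Ba By) (connect_trans yx (inA _ _ Ax Ab)).
- exact: inB.
Qed.

(* Collapsing [B] onto [x] maps walks of [E :\ e] to walks of [EA :\ e]. *)
Lemma join_minimal_left e : e \in EA -> ~ connected (A :|: B) (E :\ e).
Proof.
move=> EAe [_ connE]; have [_ [_ minA]] := treeA; apply: (minA _ EAe).
split; first by apply/set0Pn; exists x.
pose p u := if u \in A then u else x.
have pE a b : eadj (E :\ e) a b -> connect (eadj (EA :\ e)) (p a) (p b).
  rewrite /eadj !inE => /andP [ne /orP [/orP [ab|ab]|/eqP ab]].
  - have /andP [Aa Ab] := tree_edge_ends treeA ab; rewrite /p Aa Ab.
    by apply: connect1; rewrite /eadj !inE ne ab.
  - have /andP [Ba Bb] := tree_edge_ends treeB ab.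
    by rewrite /p (disjointFl disjAB Ba) (disjointFl disjAB Bb) connect0.
  - have px : p x = x by rewrite /p Ax.
    have py : p y = x by rewrite /p (disjointFl disjAB By).
    have : a \in [set x; y] by rewrite -ab set21.
    have : b \in [set x; y] by rewrite -ab !inE eqxx orbT.
    by do 2 case/set2P => ->; rewrite ?px ?py connect0.
move=> a b Aa Ab; have := connect_homo pE (connE a b _ _); rewrite /p Aa Ab.
by apply; rewrite inE ?Aa ?Ab.
Qed.

(* The edge [xy] is a bridge: no edge of [E :\ [set x; y]] crosses from [A] to [B]. *)
Lemma join_minimal_bridge : ~ connected (A :|: B) (E :\ [set x; y]).
Proof.
case=> _ connE.
have sideE a b : eadj (E :\ [set x; y]) a b -> (a \in A) = (b \in A).
  rewrite /eadj !inE => /andP [ne /orP [/orP [ab|ab]|/eqP ab]].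
  - by have /andP [-> ->] := tree_edge_ends treeA ab.
  - have /andP [Ba Bb] := tree_edge_ends treeB ab.
    by rewrite (disjointFl disjAB Ba) (disjointFl disjAB Bb).
  - by rewrite ab eqxx in ne.
have /connectP [s xs ys] : connect (eadj (E :\ [set x; y])) x y.
  by apply: connE; rewrite inE ?Ax ?By ?orbT.
have walkA a t : a \in A -> path (eadj (E :\ [set x; y])) a t -> last a t \in A.
  elim: t a => [|c t IHt] a Aa //=.
  by case/andP => ac ct; apply: IHt ct; rewrite -(sideE _ _ ac).
have := walkA _ _ Ax xs.
by rewrite -ys (disjointFl disjAB By).
Qed.
End TreeJoin.

Lemma tree_join (T : finType) (A B : {set T}) (EA EB : {set {set T}}) (x y : T) :
  tree A EA -> tree B EB -> [disjoint A & B] -> x \in A -> y \in B ->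
  tree (A :|: B) (EA :|: EB :|: [set [set x; y]]).
Proof.
move=> treeA treeB disjAB Ax By; split; first exact: join_graph.
split; first exact: join_connected.
move=> e; rewrite !inE => /orP [/orP [EAe|EBe]|/eqP ->].
- exact: join_minimal_left.
- rewrite setUC (setUC EA) [[set x; y]]setUC.
  by apply: join_minimal_left; rewrite // disjoint_sym.
- exact: join_minimal_bridge.
Qed.

Lemma imset_set2 (aT rT : finType) (f : aT -> rT) a b : f @: [set a; b] = [set f a; f b].
Proof. by rewrite imsetU1 imset_set1. Qed.

Lemma imset_in_inj (aT rT : finType) (D : {set aT}) (f : aT -> rT) (A B : {set aT}) :
  {in D &, injective f} -> A \subset D -> B \subset D -> f @: A = f @: B -> A = B.
Proof.
move=> injf.
suff sub (C C' : {set aT}) : C \subset D -> C' \subset D -> f @: C = f @: C' -> C \subset C'.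
  by move=> AD BD fAB; apply/eqP; rewrite eqEsubset (sub A B) ?(sub B A).
move=> /subsetP CD /subsetP C'D fCC'; apply/subsetP => u Cu.
have /imsetP [u' C'u' /injf eq_u] : f u \in f @: C' by rewrite -fCC' imset_f.
by rewrite (eq_u (CD _ Cu) (C'D _ C'u')).
Qed.

Lemma gamma_oneP (TF : finType) (VF : {set TF}) (EF : {set {set TF}}) :
  reflect (exists2 c, c \in VF & {in VF, forall u, u != c -> [set c; u] \in EF})
          (gamma_one VF EF).
Proof.
apply: (iffP existsP) => [[c /andP [Vc /forallP cE]]|[c Vc cE]]; exists c => //.
  by move=> u Vu uc; have := cE u; rewrite Vu uc.
by rewrite Vc; apply/forallP => u; apply/implyP => Vu; apply/implyP; apply: cE.
Qed.

Section Copies.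
Variables (T TF : finType) (VF : {set TF}) (EF : {set {set TF}}).

Lemma contains_copyP (W : {set T}) (E : {set {set T}}) :
  reflect (exists f : {ffun TF -> T}, [/\ {in VF, forall a, f a \in W},
             {in VF &, injective f} & {in EF, forall e : {set TF}, f @: e \in E}])
          (contains_copy VF EF W E).
Proof.
apply: (iffP existsP) => [[f /and3P [/forallP fW /forallP finj /forallP fE]]|].
  exists f; split.
  - by move=> a Va; have := fW a; rewrite Va.
  - move=> a b Va Vb fab; have := finj a; rewrite Va => /forallP /(_ b).
    by rewrite Vb fab eqxx => /eqP.
  - by move=> e Fe; have := fE e; rewrite Fe.
case=> f [fW finj fE]; exists f; apply/and3P; split; apply/forallP => a; apply/implyP => Va.
- exact: fW.
- by apply/forallP => b; apply/implyP => Vb; apply/implyP => /eqP /finj ->.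
- exact: fE.
Qed.

Lemma contains_copyS (W W' : {set T}) (E : {set {set T}}) :
  W \subset W' -> contains_copy VF EF W E -> contains_copy VF EF W' E.
Proof.
move=> sWW' /contains_copyP [f [fW finj fE]]; apply/contains_copyP.
by exists f; split=> // a /fW /(subsetP sWW').
Qed.

Lemma no_copy_card (W : {set T}) (E : {set {set T}}) :
  #|W| < #|VF| -> ~~ contains_copy VF EF W E.
Proof.
move=> small; apply/contains_copyP => -[f [fW finj _]].
have : f @: VF \subset W by apply/subsetP => _ /imsetP [a Va ->]; apply: fW.
by move/subset_leq_card; rewrite card_in_imset // leqNgt small.
Qed.

Hypotheses (graphF : is_graph VF EF) (domF : gamma_one VF EF).

Lemma card_VF_ge3 : 3 <= #|EF| -> 3 <= #|VF|.
Proof.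
apply: contraLR; rewrite -!ltnNge !ltnS => VF2.
have : EF \subset [set VF].
  apply/subsetP => e /graphF [card_e eVF]; rewrite inE eqEcard eVF card_e.
  exact: leq_trans VF2 _.
by move/subset_leq_card; rewrite cards1 => /leq_trans; apply.
Qed.

(* A copy of [F] lies in the closed neighbourhood of the image of a dominating vertex. *)
Lemma no_copy_small_nbhd (W : {set T}) (E : {set {set T}}) :
  {in W, forall z, #|[set u in W | (u == z) || ([set z; u] \in E)]| < #|VF|} ->
  ~~ contains_copy VF EF W E.
Proof.
move=> small; apply/contains_copyP => -[f [fW finj fE]].
have /gamma_oneP [c Vc cE] := domF.
have : f @: VF \subset [set u in W | (u == f c) || ([set f c; u] \in E)].
  apply/subsetP => _ /imsetP [u Vu ->]; rewrite inE fW //=.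
  have [->|uc] := eqVneq u c; first by rewrite eqxx.
  by have := fE _ (cE _ Vu uc); rewrite imset_set2 => ->; rewrite orbT.
move/subset_leq_card; rewrite card_in_imset // => /leq_ltn_trans /(_ (small _ (fW _ Vc))).
by rewrite ltnn.
Qed.

Section JoinCopy.
Variables (V1 V2 W1 W2 : {set T}) (E1 E2 : {set {set T}}) (x y : T).
Hypotheses (disjV : [disjoint V1 & V2]) (graph1 : is_graph V1 E1) (graph2 : is_graph V2 E2).
Hypotheses (V2y : y \in V2) (sW1 : W1 \subset V1) (sW2 : W2 \subset V2) (W1x : x \notin W1).

Let E := E1 :|: E2 :|: [set [set x; y]].

Lemma edge2_in_V2 e u : e \in E2 -> u \in e -> u \in V2.
Proof. by move=> /graph2 [_ /subsetP sub] /sub. Qed.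

(* Every vertex of [F] is adjacent to the dominating vertex [c], and the only
   edge leaving [V1] is [xy] with [x \notin W1]: if [f c] falls in [W1], the
   whole copy is trapped in [W1]. *)
Lemma copy_join_left (f : {ffun TF -> T}) c :
  c \in VF -> {in VF, forall u, u != c -> [set c; u] \in EF} ->
  {in VF, forall a, f a \in W1 :|: W2} -> {in VF &, injective f} ->
  {in EF, forall e : {set TF}, f @: e \in E} -> f c \in W1 -> contains_copy VF EF W1 E1.
Proof.
move=> Vc cE fW finj fE W1fc.
have V1fc : f c \in V1 := subsetP sW1 _ W1fc.
have V1y : y \notin V1 by apply: contraL V2y => /(disjointFr disjV) ->.
have fW1 : {in VF, forall a, f a \in W1}.
  move=> a Va; have [-> //|ac] := eqVneq a c.
  have := fE _ (cE _ Va ac); rewrite imset_set2 !inE => /orP [/orP [e1|e2]|/eqP exy].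
  - have [_ /subsetP sub] := graph1 e1.
    have V1fa : f a \in V1 by apply: sub; rewrite !inE eqxx orbT.
    case/setUP: (fW _ Va) => // /(subsetP sW2) V2fa.
    by rewrite (disjointFr disjV V1fa) in V2fa.
  - by have := edge2_in_V2 e2 (set21 _ _); rewrite (disjointFr disjV V1fc).
  - have /set2P [fcx|fcy] : f c \in [set x; y] by rewrite -exy set21.
      by move: W1x; rewrite -fcx W1fc.
    by rewrite -fcy V1fc in V1y.
apply/contains_copyP; exists f; split=> // e Fe.
have [card_e eVF] := graphF Fe.
have /card_gt0P [a ea] : 0 < #|e| by rewrite card_e.
have V1fa : f a \in V1 by apply/(subsetP sW1)/fW1/(subsetP eVF).
have := fE _ Fe; rewrite !inE => /orP [/orP [//|e2]|/eqP exy].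
  by have := edge2_in_V2 e2 (imset_f _ ea); rewrite (disjointFr disjV V1fa).
have /imsetP [b eb yfb] : y \in f @: e by rewrite exy !inE eqxx orbT.
have := subsetP sW1 _ (fW1 _ (subsetP eVF _ eb)).
by rewrite -yfb (negbTE V1y).
Qed.
End JoinCopy.

Lemma contains_copy_join (V1 V2 W1 W2 : {set T}) (E1 E2 : {set {set T}}) x y :
  [disjoint V1 & V2] -> is_graph V1 E1 -> is_graph V2 E2 -> x \in V1 -> y \in V2 ->
  W1 \subset V1 -> W2 \subset V2 -> x \notin W1 -> y \notin W2 ->
  contains_copy VF EF (W1 :|: W2) (E1 :|: E2 :|: [set [set x; y]]) ->
  contains_copy VF EF W1 E1 \/ contains_copy VF EF W2 E2.
Proof.
move=> disjV graph1 graph2 V1x V2y sW1 sW2 W1x W2y /contains_copyP [f [fW finj fE]].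
have /gamma_oneP [c Vc cE] := domF.
case/setUP: (fW _ Vc) => W_fc.
  by left; apply: (copy_join_left disjV graph1 graph2 V2y sW1 sW2 W1x Vc cE fW finj fE W_fc).
right; apply: (copy_join_left _ graph2 graph1 V1x sW2 sW1 W2y Vc cE _ finj _ W_fc).
- by rewrite disjoint_sym.
- by move=> a /fW; rewrite setUC.
- by move=> e /fE; rewrite (setUC E2) (setUC [set y]).
Qed.
End Copies.

(* A pure special graph with its remainder graph forgotten: [v i] are the
   quotient vertices, [fc i] embeds [F] as the [i]-th copy, [w i] is the
   attachment vertex of the [i]-th copy and [ET] is the quotient tree. *)
Record pure_decomp (T TF : finType) (VF : {set TF}) (EF : {set {set TF}}) q
    (V : {set T}) (E : {set {set T}}) (v : nat -> T) (fc : nat -> TF -> T)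
    (w : nat -> T) (ET : {set {set T}}) : Prop := PureDecomp {
  decomp_q_gt0 : 0 < q;
  decomp_v_inj : forall i j, i < q -> j < q -> v i = v j -> i = j;
  decomp_fc_inj : forall i, i < q -> {in VF &, injective (fc i)};
  decomp_w_in : forall i, i < q -> w i \in fc i @: VF;
  decomp_copy_disj : forall i j, i < q -> j < q -> i != j ->
    [disjoint fc i @: VF & fc j @: VF];
  decomp_v_notin_copy : forall i j, i < q -> j < q -> v i \notin fc j @: VF;
  decomp_tree : tree [set v (nat_of_ord i) | i : 'I_q] ET;
  decomp_V : V = \bigcup_(i < q) (v i |: fc i @: VF);
  decomp_E : E = ET :|: \bigcup_(i < q)
    ([set fc i @: e | e : {set TF} in EF] :|: [set [set v i; w i]]) }.

Section SpecialConstr.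
Variables (T TF : finType) (VF : {set TF}) (EF : {set {set TF}}).

(* With [r = 0] the remainder graph is the single vertex [v q.-1]. *)
Lemma special_constr0_decomp q (V : {set T}) (E : {set {set T}}) :
  special_constr VF EF q 0 V E -> exists v fc w ET, pure_decomp VF EF q V E v fc w ET.
Proof.
case=> v [fc [w [ET [VR [ER /=]]]]].
case=> [[q_gt0 v_inj fcP disj vnc] treeT [_ [_ connR] cardER VRI] -> ->].
exists v, fc, w, ET.
have ER0 : ER = set0 by apply/eqP; rewrite -cards_eq0 cardER.
have : v q.-1 \in VR :&: \bigcup_(i < q) (v i |: fc i @: VF) by rewrite VRI set11.
case/setIP => VRv Vv.
split=> //; try by move=> i /fcP [].
  apply/setUidPr/subsetP => u VRu.
  by have := connR u _ VRu VRv; rewrite ER0 => /connect_eadj0 ->.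
by rewrite ER0 setU0.
Qed.

Lemma decomp_special_constr0 q (V : {set T}) E v fc w ET :
  pure_decomp VF EF q V E v fc w ET -> special_constr VF EF q 0 V E.
Proof.
case=> q_gt0 v_inj fc_inj w_in disj vnc treeT -> ->.
exists v, fc, w, ET, [set v q.-1], set0 => /=.
have vq : v q.-1 \in \bigcup_(i < q) (v i |: fc i @: VF).
  have lt_q : q.-1 < q by rewrite ltn_predL.
  by apply/bigcupP; exists (Ordinal lt_q); rewrite ?setU11.
split=> //.
- by split=> // i lt_i; split; [apply: fc_inj | apply: w_in].
- split=> [e|||]; rewrite ?inE ?cards0 //.
    split; first by apply/set0Pn; exists (v q.-1); rewrite set11.
    by move=> a b /set1P -> /set1P ->; rewrite connect0.
  by apply/setIidPl; rewrite sub1set.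
- by apply/esym/setUidPr; rewrite sub1set.
- by rewrite setU0.
Qed.

Lemma special_of_decomp m q (V : {set T}) E v fc w ET :
  pure_decomp VF EF q V E v fc w ET -> q * (#|EF| + 2) = m.+1 -> special VF EF m V E.
Proof.
move=> dec m_eq; rewrite /special -m_eq mulnK ?addn2 // modnMl.
rewrite ifN; first exact: decomp_special_constr0 dec.
by rewrite -lt0n (decomp_q_gt0 dec).
Qed.
End SpecialConstr.

Lemma card_bigcup_disj (T : finType) n (A : nat -> {set T}) c :
  (forall i, i < n -> c <= #|A i|) ->
  (forall i j, i < j -> j < n -> [disjoint A i & A j]) ->
  n * c <= #|\bigcup_(i < n) A i|.
Proof.
elim: n => [|n IHn] cardA disjA; first by rewrite mul0n.
rewrite big_ord_recr /= cardsU mulSn.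
have -> : (\bigcup_(i < n) A i) :&: A n = set0.
  apply/disjoint_setI0; rewrite disjoint_sym; apply/bigcup_disjoint => i _.
  by rewrite disjoint_sym; apply: disjA.
rewrite cards0 subn0 addnC leq_add ?cardA //.
by apply: IHn => [i lt_i|i j ij lt_j]; [apply: cardA | apply: disjA]; rewrite // ltnW.
Qed.

Section Decomp.
Variables (T TF : finType) (VF : {set TF}) (EF : {set {set TF}}).
Hypotheses (graphF : is_graph VF EF) (domF : gamma_one VF EF) (kF : 3 <= #|EF|).
Variables (q : nat) (V : {set T}) (E : {set {set T}}) (v : nat -> T) (fc : nat -> TF -> T).
Variables (w : nat -> T) (ET : {set {set T}}).
Hypothesis dec : pure_decomp VF EF q V E v fc w ET.

Local Notation Vc i := (fc i @: VF).
Local Notation Vq := [set v (nat_of_ord i) | i : 'I_q].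

Lemma card_Vc i : i < q -> #|Vc i| = #|VF|.
Proof. by move=> lt_i; rewrite card_in_imset //; apply: (decomp_fc_inj dec). Qed.

Lemma VqP u : reflect (exists2 i, i < q & u = v i) (u \in Vq).
Proof.
apply: (iffP imsetP) => [[i _ ->]|[i lt_i ->]]; first by exists i.
by exists (Ordinal lt_i).
Qed.

Lemma v_in_Vq i : i < q -> v i \in Vq.
Proof. by move=> lt_i; apply/VqP; exists i. Qed.

Lemma card_Vq : #|Vq| = q.
Proof.
by rewrite card_in_imset ?card_ord // => i j _ _ /(decomp_v_inj dec) ij; apply/val_inj/ij.
Qed.

Lemma Vc_index_uniq i j u : i < q -> j < q -> u \in Vc i -> u \in Vc j -> i = j.
Proof.
move=> lt_i lt_j ui uj; apply/eqP; apply: contraTT uj => ij.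
by rewrite (disjointFr (decomp_copy_disj dec lt_i lt_j ij) ui).
Qed.

Lemma Vq_notin_Vc u i : i < q -> u \in Vq -> u \notin Vc i.
Proof. by move=> lt_i /VqP [j lt_j ->]; apply: (decomp_v_notin_copy dec). Qed.

Lemma tree_edge_Vq e : e \in ET -> #|e| = 2 /\ e \subset Vq.
Proof. by case: (decomp_tree dec) => graphT _; apply: graphT. Qed.

Lemma copy_edge_Vc i e : e \in EF -> fc i @: e \subset Vc i.
Proof. by case/graphF => _; apply: imsetS. Qed.

Lemma decomp_edgeP e : e \in E ->
  [\/ e \in ET,
      exists2 i, i < q & exists2 e', e' \in EF & e = fc i @: e'
    | exists2 i, i < q & e = [set v i; w i]].
Proof.
rewrite (decomp_E dec) => /setUP [|/bigcupP [i _]]; first by constructor 1.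
case/setUP => [/imsetP [e' EFe' ->]|/set1P ->]; [constructor 2 | constructor 3]; exists i => //.
by exists e'.
Qed.

Lemma decomp_vertexP u :
  u \in V -> (exists2 i, i < q & u = v i) \/ (exists2 i, i < q & u \in Vc i).
Proof.
by rewrite (decomp_V dec) => /bigcupP [i _] /setU1P [->|]; [left|right]; exists i.
Qed.

Lemma v_in_V i : i < q -> v i \in V.
Proof.
by move=> lt_i; rewrite (decomp_V dec); apply/bigcupP; exists (Ordinal lt_i); rewrite ?setU11.
Qed.

Lemma Vc_in_V i u : i < q -> u \in Vc i -> u \in V.
Proof.
by move=> lt_i Vcu; rewrite (decomp_V dec); apply/bigcupP; exists (Ordinal lt_i); rewrite ?setU1r.
Qed.

Lemma Vq_sub_V : Vq \subset V.
Proof. by apply/subsetP => u /VqP [i lt_i ->]; apply: v_in_V. Qed.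

Lemma tree_edge_in e : e \in ET -> e \in E.
Proof. by move=> ETe; rewrite (decomp_E dec) inE ETe. Qed.

Lemma attach_edge_in i : i < q -> [set w i; v i] \in E.
Proof.
move=> lt_i; rewrite setUC (decomp_E dec); apply/setUP; right.
by apply/bigcupP; exists (Ordinal lt_i); rewrite // !inE eqxx orbT.
Qed.

Lemma copy_edge_in i e : i < q -> e \in EF -> fc i @: e \in E.
Proof.
move=> lt_i EFe; rewrite (decomp_E dec); apply/setUP; right.
by apply/bigcupP; exists (Ordinal lt_i); rewrite // inE imset_f.
Qed.

Lemma copy_nbr j z u : j < q -> z \in Vc j -> [set z; u] \in E ->
  u \in Vc j \/ (z = w j /\ u = v j).
Proof.
move=> lt_j Vcz /decomp_edgeP [ETe|[i lt_i [e' EFe' e_eq]]|[i lt_i e_eq]].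
- have [_ /subsetP sub] := tree_edge_Vq ETe.
  by have := Vq_notin_Vc lt_j (sub z (set21 _ _)); rewrite Vcz.
- have /subsetP sub := copy_edge_Vc i EFe'; rewrite -e_eq in sub.
  have ij := Vc_index_uniq lt_i lt_j (sub z (set21 _ _)) Vcz; subst i.
  by left; apply: sub; rewrite !inE eqxx orbT.
have /set2P [zv|zw] : z \in [set v i; w i] by rewrite -e_eq set21.
  by move: Vcz; rewrite zv (negbTE (decomp_v_notin_copy dec lt_i lt_j)).
have Vciz : z \in Vc i by rewrite zw (decomp_w_in dec).
have ij := Vc_index_uniq lt_i lt_j Vciz Vcz; subst i.
have /set2P [uv|uw] : u \in [set v j; w j] by rewrite -e_eq !inE eqxx orbT.
  by right.
by left; rewrite uw (decomp_w_in dec).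
Qed.

Lemma decomp_graph : is_graph V E.
Proof.
move=> e /decomp_edgeP [ETe|[i lt_i [e' EFe' ->]]|[i lt_i ->]].
- have [card_e /subsetP sub] := tree_edge_Vq ETe; split=> //.
  by apply/subsetP => u /sub /VqP [i lt_i ->]; apply: v_in_V.
- have [card_e' /subsetP sub] := graphF EFe'; split.
    by rewrite card_in_imset // => a b /sub Va /sub Vb; apply: (decomp_fc_inj dec lt_i).
  by apply/subsetP => u /(subsetP (copy_edge_Vc i EFe')); apply: Vc_in_V.
have vw : v i != w i.
  by apply/eqP => vw; have := decomp_v_notin_copy dec lt_i lt_i; rewrite vw (decomp_w_in dec).
rewrite cards2 vw; split=> //; apply/subsetP => u /set2P [] ->.
  exact: v_in_V.
exact/(Vc_in_V lt_i)/(decomp_w_in dec).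
Qed.

Lemma quotient_has_nbr i : 1 < q -> i < q ->
  exists2 j, j < q & (j != i) && ([set v i; v j] \in E).
Proof.
move=> q_gt1 lt_i; pose j0 := if i == 0 then 1 else 0.
have lt_j0 : j0 < q by rewrite /j0; case: ifP => _; rewrite // ltnW.
have j0i : j0 != i by rewrite /j0; case: (eqVneq i 0) => [->|]; rewrite // eq_sym.
have [_ [[_ connT] _]] := decomp_tree dec.
case/connectP: (connT _ _ (v_in_Vq lt_i) (v_in_Vq lt_j0)) => [[|a s]] /=.
  by move=> _ /esym/(decomp_v_inj dec lt_i lt_j0) ij; rewrite ij eqxx in j0i.
case/andP => va _ _; have [card_e /subsetP sub] := tree_edge_Vq va.
have /VqP [j lt_j aj] : a \in Vq by apply: sub; rewrite !inE eqxx orbT.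
exists j => //; rewrite -aj (tree_edge_in va) andbT.
by apply/eqP => ji; move: card_e; rewrite aj ji setUid cards1.
Qed.

Local Notation block i := ([set fc i @: e | e : {set TF} in EF] :|: [set [set v i; w i]]).

Lemma block_meets_Vc i e : i < q -> e \in block i -> exists2 a, a \in e & a \in Vc i.
Proof.
move=> lt_i /setUP [/imsetP [e' EFe' ->]|/set1P ->].
  have [card_e' /subsetP sub] := graphF EFe'.
  have /card_gt0P [a e'a] : 0 < #|e'| by rewrite card_e'.
  by exists (fc i a); rewrite imset_f ?sub.
by exists (w i); rewrite ?(decomp_w_in dec) // !inE eqxx orbT.
Qed.

Lemma block_sub i e : i < q -> e \in block i -> e \subset v i |: Vc i.
Proof.
move=> lt_i /setUP [/imsetP [e' EFe' ->]|/set1P ->].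
  exact: subset_trans (copy_edge_Vc i EFe') (subsetUr _ _).
by apply/subsetP => u /set2P [] ->; rewrite !inE ?eqxx ?(decomp_w_in dec) ?orbT.
Qed.

Lemma card_block i : i < q -> #|EF| + 1 <= #|block i|.
Proof.
move=> lt_i; rewrite cardsU cards1.
have -> : [set fc i @: e | e : {set TF} in EF] :&: [set [set v i; w i]] = set0.
  apply/setP => e; rewrite !inE; apply/negP => /andP [/imsetP [e' EFe' ->] /eqP e_eq].
  have := subsetP (copy_edge_Vc i EFe') (v i); rewrite e_eq set21.
  by rewrite (negbTE (decomp_v_notin_copy dec lt_i lt_i)) => /(_ isT).
rewrite cards0 subn0 card_in_imset // => a b /graphF [_ aVF] /graphF [_ bVF].
exact: imset_in_inj (decomp_fc_inj dec lt_i) aVF bVF.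
Qed.

Lemma block_disj i j : i < j -> j < q -> [disjoint block i & block j].
Proof.
move=> ij lt_j; have lt_i := ltn_trans ij lt_j.
rewrite -setI_eq0; apply/set0Pn => -[e /setIP [ei ej]].
have [a ea Vcia] := block_meets_Vc lt_i ei.
case/setU1P: (subsetP (block_sub lt_j ej) a ea) => [av|Vcja].
  by have := decomp_v_notin_copy dec lt_j lt_i; rewrite -av Vcia.
by move: ij; rewrite (Vc_index_uniq lt_i lt_j Vcia Vcja) ltnn.
Qed.

(* Each block has [k + 1] edges and the quotient tree at least [q - 1]. *)
Lemma decomp_card_edges : q * (#|EF| + 2) <= #|E| + 1.
Proof.
have blocks := card_bigcup_disj card_block block_disj.
have [_ [connT _]] := decomp_tree dec.
have := connected_card_le connT; rewrite card_Vq => cardT.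
have -> : #|E| = #|ET| + #|\bigcup_(i < q) block i|.
  rewrite (decomp_E dec) cardsU -[RHS]subn0; congr (_ - _); apply/eqP; rewrite cards_eq0.
  apply/set0Pn => -[e /setIP [ETe /bigcupP [i _ ei]]].
  have [a ea Vcia] := block_meets_Vc (ltn_ord i) ei.
  have [_ /subsetP sub] := tree_edge_Vq ETe.
  by have := Vq_notin_Vc (ltn_ord i) (sub _ ea); rewrite Vcia.
rewrite -[2]/(1 + 1) addnA mulnDr muln1.
by apply: leq_trans (leq_add blocks cardT) _; rewrite addnCA addnA.
Qed.

Lemma no_copy_local (W : {set T}) : W \subset V :\: Vq ->
  (forall j, j < q -> exists2 a, a \in Vc j & a \notin W) -> ~~ contains_copy VF EF W E.
Proof.
move=> /subsetP sW missing; apply: no_copy_small_nbhd => // z Wz.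
have /setDP [Vz Vqz] := sW _ Wz.
have [[j lt_j zv]|[j lt_j Vcjz]] := decomp_vertexP Vz; first by rewrite zv v_in_Vq in Vqz.
have [a Vcja Wa] := missing _ lt_j.
have : [set u in W | (u == z) || ([set z; u] \in E)] \subset Vc j :\ a.
  apply/subsetP => u; rewrite !inE => /andP [Wu /orP [/eqP ->|zu]].
    by rewrite Vcjz andbT; apply: contraNneq Wa => <-.
  rewrite (contraNneq _ Wa) => [|<- //].
  case: (copy_nbr lt_j Vcjz zu) => // -[_ uv].
  by have /setDP [_] := sW _ Wu; rewrite uv v_in_Vq.
move/subset_leq_card/leq_ltn_trans; apply.
have := cardsD1 a (Vc j); rewrite Vcja card_Vc // add1n => ->.
by have := card_VF_ge3 graphF kF; case: #|VF|.
Qed.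

Lemma Vq_isolating : isolating VF EF V E Vq.
Proof.
rewrite /isolating Vq_sub_V; apply: no_copy_local => [|j lt_j].
  exact/setDS/subset_closed_nbhd.
exists (w j); first exact: (decomp_w_in dec).
by rewrite inE negb_and negbK (closed_nbhd_edge (v_in_Vq lt_j) (attach_edge_in lt_j)).
Qed.

Lemma iotaF_le_q : iotaF VF EF V E <= q.
Proof. by rewrite -card_Vq; apply/iotaF_le_card/Vq_isolating. Qed.

Lemma copy_vertex_has_nbr i u : i < q -> u \in Vc i -> exists2 u', u' != u & [set u; u'] \in E.
Proof.
move=> lt_i /imsetP [a Va ->]; have /gamma_oneP [c Vc cE] := domF.
have fc_inj := decomp_fc_inj dec lt_i.
have [ac|ac] := eqVneq a c.
  have : 0 < #|VF :\ c|.
    by have := card_VF_ge3 graphF kF; rewrite (cardsD1 c) Vc add1n ltnS => /ltnW.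
  case/card_gt0P => b /setD1P [bc Vb]; exists (fc i b).
    by apply: contraNneq bc => /fc_inj ->; rewrite ?ac.
  by have := copy_edge_in lt_i (cE _ Vb bc); rewrite imset_set2 ac.
exists (fc i c); first by apply: contraNneq ac => /fc_inj ->.
by have := copy_edge_in lt_i (cE _ Va ac); rewrite imset_set2 setUC.
Qed.

Lemma v_in_Vq_but i j : i < q -> j < q -> j != i -> v j \in Vq :\ v i.
Proof.
move=> lt_i lt_j ji; rewrite !inE v_in_Vq // andbT.
by apply: contraNneq ji => /(decomp_v_inj dec lt_j lt_i) ->.
Qed.

Lemma card_Vq_but i : i < q -> #|Vq :\ v i| < q.
Proof. by move=> lt_i; have := proper_card (properD1 (v_in_Vq lt_i)); rewrite card_Vq. Qed.

(* Every quotient vertex has a neighbour in the quotient tree, so [Vq :\ v i]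
   dominates all of [Vq] once [q > 1]. *)
Lemma v_covered i j (D : {set T}) : 1 < q -> i < q -> j < q ->
  Vq :\ v i \subset D -> v j \in closed_nbhd E D.
Proof.
move=> q_gt1 lt_i lt_j sD.
have [->|ji] := eqVneq j i; last exact/(subsetP (subset_closed_nbhd E D))/(subsetP sD)/v_in_Vq_but.
have [l lt_l /andP [li il]] := quotient_has_nbr q_gt1 lt_i.
exact: closed_nbhd_edge (subsetP sD _ (v_in_Vq_but lt_i lt_l li)) il.
Qed.

Lemma w_covered i j (D : {set T}) : i < q -> j < q -> j != i ->
  Vq :\ v i \subset D -> w j \in closed_nbhd E D.
Proof.
move=> lt_i lt_j ji sD.
exact: closed_nbhd_edge (subsetP sD _ (v_in_Vq_but lt_i lt_j ji)) (attach_edge_in lt_j).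
Qed.

Lemma decomp_q1 : q <= 1 -> q = 1.
Proof. by have := decomp_q_gt0 dec; case: q => [|[]]. Qed.

Lemma decomp1_V : q = 1 -> V = v 0 |: Vc 0.
Proof. by move=> q1; rewrite (decomp_V dec) q1 big_ord1. Qed.

Lemma decomp1_card_V : q = 1 -> #|V| = #|VF| + 1.
Proof.
move=> q1; have lt_0 : 0 < q by rewrite q1.
by rewrite (decomp1_V q1) cardsU1 card_Vc // (decomp_v_notin_copy dec lt_0 lt_0) addn1.
Qed.

Lemma decomp1_card_E : q = 1 -> #|E| <= #|EF| + 1.
Proof.
move=> q1; have ET0 : ET = set0.
  apply/setP => e; rewrite inE; apply/negP => /tree_edge_Vq [card_e /subset_leq_card].
  by rewrite card_Vq card_e q1.
rewrite (decomp_E dec) ET0 set0U q1 big_ord1.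
by apply: leq_trans (leq_card_setU _ _) _; rewrite cards1 leq_add2r leq_imset_card.
Qed.

Lemma isolate_off_quotient x : x \in V -> x \notin Vq ->
  (q = 1 /\ contains_copy VF EF (V :\ x) E) \/
  exists D : {set T}, [/\ D \subset V, #|D| < q &
    ~~ contains_copy VF EF (V :\: (closed_nbhd E D :|: [set x])) E].
Proof.
move=> Vx Vqx; have [[i lt_i xv]|[i lt_i Vcix]] := decomp_vertexP Vx.
  by rewrite xv v_in_Vq in Vqx.
have [q_gt1|/decomp_q1 q1] := ltnP 1 q.
  right; exists (Vq :\ v i); split.
  - exact: subset_trans (subD1set _ _) Vq_sub_V.
  - exact: card_Vq_but.
  apply: no_copy_local => [|j lt_j].
    apply: setDS; apply/subsetP => _ /VqP [j lt_j ->].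
    by rewrite inE (v_covered q_gt1 lt_i lt_j (subxx _)).
  have [->|ji] := eqVneq j i; first by exists x; rewrite // !inE eqxx orbT.
  exists (w j); first exact: (decomp_w_in dec).
  by rewrite inE negb_and negbK inE (w_covered lt_i lt_j ji (subxx _)).
have [copy|no_copy] := boolP (contains_copy VF EF (V :\ x) E); [left|right] => //.
by exists set0; rewrite sub0set cards0 closed_nbhd0 set0U (decomp_q_gt0 dec).
Qed.

Lemma isolate_with y : y \in V -> exists D : {set T}, [/\ D \subset V, y \in D, #|D| <= q &
  ~~ contains_copy VF EF (V :\: closed_nbhd E D) E].
Proof.
move=> Vy; have [Vqy|Vqy] := boolP (y \in Vq).
  by have /andP [sVq isoVq] := Vq_isolating; exists Vq; rewrite card_Vq.
have [[i lt_i yv]|[i lt_i Vciy]] := decomp_vertexP Vy; first by rewrite yv v_in_Vq in Vqy.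
have [q_gt1|/decomp_q1 q1] := ltnP 1 q.
  have sD : Vq :\ v i \subset y |: (Vq :\ v i) by apply: subsetUr.
  exists (y |: (Vq :\ v i)); split; rewrite ?setU11 //.
  - by rewrite subUset sub1set Vy (subset_trans (subD1set _ _) Vq_sub_V).
  - rewrite cardsU1; apply: leq_trans (leq_add (leq_b1 _) (leqnn _)) _.
    by rewrite add1n card_Vq_but.
  apply: no_copy_local => [|j lt_j].
    apply: setDS; apply/subsetP => _ /VqP [j lt_j ->].
    exact: (v_covered q_gt1 lt_i lt_j sD).
  have [->|ji] := eqVneq j i.
    by exists y; rewrite // inE negb_and negbK (subsetP (subset_closed_nbhd _ _)) ?setU11.
  exists (w j); first exact: (decomp_w_in dec).
  by rewrite inE negb_and negbK (w_covered lt_i lt_j ji sD).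
exists [set y]; rewrite sub1set Vy set11 cards1 (decomp_q_gt0 dec); split=> //.
have [y' y'y yy'] := copy_vertex_has_nbr lt_i Vciy.
have Vy' : y' \in V by have [_ /subsetP] := decomp_graph yy'; apply; rewrite !inE eqxx orbT.
apply: no_copy_card; apply: leq_ltn_trans (subset_leq_card (_ : _ \subset V :\: [set y; y'])) _.
  apply: setDS; apply/subsetP => u /set2P [] ->.
    exact: (subsetP (subset_closed_nbhd _ _)) (set11 _).
  by apply: (closed_nbhd_edge (set11 y)); rewrite setUC.
rewrite cardsD (setIidPr _) ?subUset ?sub1set ?Vy ?Vy' // cards2 eq_sym y'y decomp1_card_V //.
by have := card_VF_ge3 graphF kF; case: #|VF| => // n _; rewrite addn1 subSS subn1.
Qed.

(* For [q = 1], a copy of [F] avoiding [x] takes all of [V :\ x], so [x]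
   can serve as the quotient vertex instead. *)
Lemma decomp_recentre x : q = 1 -> x \in V -> x \notin Vq -> contains_copy VF EF (V :\ x) E ->
  exists v' fc' w' ET', pure_decomp VF EF 1 V E v' fc' w' ET' /\ x = v' 0.
Proof.
move=> q1 Vx Vqx /contains_copyP [f [fW finj fE]].
have lt_0 : 0 < q by rewrite q1.
have Vc0x : x \in Vc 0.
  by move: Vx; rewrite (decomp1_V q1) => /setU1P [xv|//]; rewrite xv v_in_Vq in Vqx.
have fVF : f @: VF = V :\ x.
  have cardVx : #|V :\ x| = #|VF|.
    by have := cardsD1 x V; rewrite Vx decomp1_card_V // add1n addn1 => -[].
  apply/eqP; rewrite eqEcard card_in_imset // cardVx leqnn andbT.
  by apply/subsetP => _ /imsetP [a Va ->]; apply: fW.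
have [y' y'x xy'] := copy_vertex_has_nbr lt_0 Vc0x.
have Vy' : y' \in V by have [_ /subsetP] := decomp_graph xy'; apply; rewrite !inE eqxx orbT.
pose Ef := [set f @: e | e : {set TF} in EF].
have card_Ef : #|Ef| = #|EF|.
  rewrite card_in_imset // => a b /graphF [_ aVF] /graphF [_ bVF].
  exact: imset_in_inj finj aVF bVF.
have Efxy' : [set x; y'] \notin Ef.
  apply/imsetP => -[e EFe e_eq]; have [_ eVF] := graphF EFe.
  have : x \in f @: VF by apply: subsetP (imsetS f eVF) _ _; rewrite -e_eq set21.
  by rewrite fVF setD11.
have E_eq : E = [set x; y'] |: Ef.
  apply/eqP; rewrite eq_sym eqEcard subUset sub1set xy' cardsU1 Efxy' card_Ef add1n -addn1.
  rewrite (decomp1_card_E q1) andbT.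
  by apply/subsetP => _ /imsetP [e EFe ->]; apply: fE.
have Vq1 : [set (fun=> x) (nat_of_ord i) | i : 'I_1] = [set x].
  by apply/setP => u; rewrite inE; apply/imsetP/eqP => [[i _ ->]|->] //; exists ord0.
exists (fun=> x), (fun=> f), (fun=> y'), set0; split=> //; split=> //.
- by move=> i j; rewrite !ltnS !leqn0 => /eqP -> /eqP ->.
- by move=> i _; rewrite fVF !inE y'x.
- by move=> i j; rewrite !ltnS !leqn0 => /eqP -> /eqP ->; rewrite eqxx.
- by move=> i j _ _; rewrite fVF setD11.
- rewrite Vq1; split=> [e|]; first by rewrite inE.
  split=> [|e]; last by rewrite inE.
  by split=> [|a b /set1P -> /set1P ->]; [apply/set0Pn; exists x; rewrite set11 | apply: connect0].
- by rewrite big_ord1 fVF setD1K.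
- by rewrite set0U big_ord1 E_eq setUC.
Qed.
End Decomp.

Lemma card_join_edges (T : finType) (V1 V2 : {set T}) (E1 E2 : {set {set T}}) x y :
  is_graph V1 E1 -> is_graph V2 E2 -> [disjoint V1 & V2] -> x \in V1 -> y \in V2 ->
  #|E1 :|: E2 :|: [set [set x; y]]| = #|E1| + #|E2| + 1.
Proof.
move=> graph1 graph2 disjV V1x V2y.
have inV1 e : e \in E1 -> {subset e <= V1} by case/graph1 => _ /subsetP.
have inV2 e : e \in E2 -> {subset e <= V2} by case/graph2 => _ /subsetP.
have xyE : [set x; y] \notin E1 :|: E2.
  apply/setUP => -[/inV1 /(_ y) | /inV2 /(_ x (set21 _ _))].
    by rewrite !inE eqxx orbT (disjointFl disjV V2y) => /(_ isT).
  by rewrite (disjointFr disjV V1x).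
have -> : E1 :|: E2 :|: [set [set x; y]] = [set x; y] |: (E1 :|: E2) by rewrite setUC.
rewrite cardsU1 xyE cardsU.
have -> : E1 :&: E2 = set0.
  apply/setP => e; rewrite !inE; apply/andP => -[E1e E2e].
  have [card_e _] := graph1 _ E1e.
  have /card_gt0P [u eu] : 0 < #|e| by rewrite card_e.
  by have := inV2 _ E2e _ eu; rewrite (disjointFr disjV (inV1 _ E1e _ eu)).
by rewrite cards0 subn0 add1n addn1.
Qed.

Section JoinDecomp.
Variables (T TF : finType) (VF : {set TF}) (EF : {set {set TF}}).
Variables (q1 q2 : nat) (V1 V2 : {set T}) (E1 E2 : {set {set T}}) (v1 v2 : nat -> T).
Variables (fc1 fc2 : nat -> TF -> T) (w1 w2 : nat -> T) (ET1 ET2 : {set {set T}}).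
Hypotheses (dec1 : pure_decomp VF EF q1 V1 E1 v1 fc1 w1 ET1).
Hypotheses (dec2 : pure_decomp VF EF q2 V2 E2 v2 fc2 w2 ET2).
Hypothesis disjV : [disjoint V1 & V2].

Local Notation catf f1 f2 := (fun i => if i < q1 then f1 i else f2 (i - q1)).

Lemma index_cat i : i < q1 + q2 -> i < q1 \/ q1 <= i /\ i - q1 < q2.
Proof. by move=> lt_i; case: (ltnP i q1) => ?; [left|right; split=> //; lia]. Qed.

Lemma notin_both u : u \in V1 -> u \in V2 -> False.
Proof. by move=> V1u; rewrite (disjointFr disjV V1u). Qed.

Lemma Vq_cat : [set catf v1 v2 (nat_of_ord i) | i : 'I_(q1 + q2)] =
  [set v1 (nat_of_ord i) | i : 'I_q1] :|: [set v2 (nat_of_ord i) | i : 'I_q2].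
Proof.
apply/setP => u; rewrite inE; apply/imsetP/orP => [[i _ ->]|[] /imsetP [i _ ->]].
- case: (index_cat (ltn_ord i)) => [lt_i|[le_i lt_i]]; rewrite ?lt_i ?ltnNge ?le_i /=.
    by left; apply/imsetP; exists (Ordinal lt_i).
  by right; apply/imsetP; exists (Ordinal lt_i).
- by exists (lshift q2 i); rewrite //= ltn_ord.
- by exists (rshift q1 i); rewrite //= ltnNge leq_addr /= addKn.
Qed.

Lemma pure_decomp_join a b : a < q1 -> b < q2 ->
  pure_decomp VF EF (q1 + q2) (V1 :|: V2) (E1 :|: E2 :|: [set [set v1 a; v2 b]])
    (catf v1 v2) (catf fc1 fc2) (catf w1 w2) (ET1 :|: ET2 :|: [set [set v1 a; v2 b]]).
Proof.
move=> lt_a lt_b.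
have Vc1 i u : i < q1 -> u \in fc1 i @: VF -> u \in V1 := fun lt_i => Vc_in_V dec1 lt_i.
have Vc2 i u : i < q2 -> u \in fc2 i @: VF -> u \in V2 := fun lt_i => Vc_in_V dec2 lt_i.
have Vv1 := v_in_V dec1; have Vv2 := v_in_V dec2.
split.
- by rewrite addn_gt0 (decomp_q_gt0 dec1).
- move=> i j /index_cat [lt_i|[le_i lt_i]] /index_cat [lt_j|[le_j lt_j]];
    rewrite ?lt_i ?lt_j ?ltnNge ?le_i ?le_j /=.
  + exact: (decomp_v_inj dec1).
  + by move=> vij; case: (notin_both (Vv1 _ lt_i)); rewrite vij Vv2.
  + by move=> vij; case: (notin_both (Vv1 _ lt_j)); rewrite -vij Vv2.
  + by move/(decomp_v_inj dec2 lt_i lt_j); lia.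
- move=> i /index_cat [lt_i|[le_i lt_i]]; rewrite ?lt_i ?ltnNge ?le_i /=.
    exact: (decomp_fc_inj dec1).
  exact: (decomp_fc_inj dec2).
- move=> i /index_cat [lt_i|[le_i lt_i]]; rewrite ?lt_i ?ltnNge ?le_i /=.
    exact: (decomp_w_in dec1).
  exact: (decomp_w_in dec2).
- move=> i j /index_cat [lt_i|[le_i lt_i]] /index_cat [lt_j|[le_j lt_j]] ij;
    rewrite ?lt_i ?lt_j ?ltnNge ?le_i ?le_j /=.
  + exact: (decomp_copy_disj dec1).
  + rewrite -setI_eq0; apply/set0Pn => -[u /setIP [/(Vc1 _ _ lt_i) + /(Vc2 _ _ lt_j)]].
    exact: notin_both.
  + rewrite -setI_eq0; apply/set0Pn => -[u /setIP [/(Vc2 _ _ lt_i) + /(Vc1 _ _ lt_j)]].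
    by move=> /[swap]; apply: notin_both.
  + by apply: (decomp_copy_disj dec2) => //; apply: contraNneq ij => ?; apply/eqP; lia.
- move=> i j /index_cat [lt_i|[le_i lt_i]] /index_cat [lt_j|[le_j lt_j]];
    rewrite ?lt_i ?lt_j ?ltnNge ?le_i ?le_j /=.
  + exact: (decomp_v_notin_copy dec1).
  + by apply/negP => /(Vc2 _ _ lt_j); apply: notin_both (Vv1 _ lt_i).
  + by apply/negP => /(Vc1 _ _ lt_j) V1v; apply: notin_both V1v (Vv2 _ lt_i).
  + exact: (decomp_v_notin_copy dec2).
- rewrite Vq_cat; apply: tree_join; [exact: (decomp_tree dec1)|exact: (decomp_tree dec2)| | |].
  + rewrite -setI_eq0; apply/set0Pn => -[u /setIP [/imsetP [i _ ->] /imsetP [j _ vij]]].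
    by apply: notin_both (Vv1 _ (ltn_ord i)) _; rewrite vij Vv2.
  + by apply/imsetP; exists (Ordinal lt_a).
  + by apply/imsetP; exists (Ordinal lt_b).
- rewrite (decomp_V dec1) (decomp_V dec2) big_split_ord /=.
  by congr (_ :|: _); apply: eq_bigr => i _; rewrite /= ?ltn_ord // ltnNge leq_addr /= addKn.
- rewrite (decomp_E dec1) (decomp_E dec2) big_split_ord /= setUACA setUAC.
  by congr (_ :|: _ :|: _); congr (_ :|: _); apply: eq_bigr => i _;
    rewrite /= ?ltn_ord // ltnNge leq_addr /= addKn.
Qed.
End JoinDecomp.

Section JoinIota.
Variables (T TF : finType) (VF : {set TF}) (EF : {set {set TF}}).
Hypotheses (graphF : is_graph VF EF) (domF : gamma_one VF EF) (kF : 3 <= #|EF|).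
Variables (q1 q2 : nat) (V1 V2 : {set T}) (E1 E2 : {set {set T}}) (v1 v2 : nat -> T).
Variables (fc1 fc2 : nat -> TF -> T) (w1 w2 : nat -> T) (ET1 ET2 : {set {set T}}) (x y : T).
Hypotheses (dec1 : pure_decomp VF EF q1 V1 E1 v1 fc1 w1 ET1).
Hypotheses (dec2 : pure_decomp VF EF q2 V2 E2 v2 fc2 w2 ET2).
Hypotheses (disjV : [disjoint V1 & V2]) (V1x : x \in V1) (V2y : y \in V2).

Let E := E1 :|: E2 :|: [set [set x; y]].

Lemma iotaF_join_ge :
  iotaF VF EF (V1 :|: V2) E * (#|EF| + 2) = #|E| + 1 -> q1 + q2 <= iotaF VF EF (V1 :|: V2) E.
Proof.
rewrite /E (card_join_edges (decomp_graph graphF dec1) (decomp_graph graphF dec2)) // => iotaE.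
rewrite -(@leq_pmul2r (#|EF| + 2)) ?addn2 // -addn2 iotaE mulnDl.
apply: leq_trans (leq_add (decomp_card_edges graphF dec1) (decomp_card_edges graphF dec2)) _.
by rewrite addnACA addnA.
Qed.

(* An isolating set of [V1 - x] of size [< q1], together with one of [V2]
   containing [y] (which dominates [x]), isolates the join. *)
Lemma iotaF_join_lt (D1 : {set T}) : D1 \subset V1 -> #|D1| < q1 ->
  ~~ contains_copy VF EF (V1 :\: (closed_nbhd E1 D1 :|: [set x])) E1 ->
  iotaF VF EF (V1 :|: V2) E < q1 + q2.
Proof.
move=> sD1 card_D1 iso1.
have [D2 [sD2 D2y card_D2 iso2]] := isolate_with graphF domF kF dec2 V2y.
have graph1 := decomp_graph graphF dec1; have graph2 := decomp_graph graphF dec2.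
have sE1 : E1 \subset E by rewrite /E -setUA subsetUl.
have sE2 : E2 \subset E by rewrite /E (setUC E1) -setUA subsetUl.
have Nx : x \in closed_nbhd E (D1 :|: D2).
  by apply: (closed_nbhd_edge (d := y)); [rewrite inE D2y orbT | rewrite /E !inE eqxx orbT].
apply: leq_ltn_trans (iotaF_le_card (D := D1 :|: D2) _) _; last first.
  by apply: leq_ltn_trans (leq_card_setU _ _) _; rewrite -addSn leq_add.
rewrite /isolating subUset (subset_trans sD1 (subsetUl _ _)) (subset_trans sD2 (subsetUr _ _)) /=.
set W1 := V1 :\: (closed_nbhd E1 D1 :|: [set x]); set W2 := V2 :\: closed_nbhd E2 D2.
have sW : (V1 :|: V2) :\: closed_nbhd E (D1 :|: D2) \subset W1 :|: W2.
  apply/subsetP => u /setDP [/setUP [V1u|V2u] Nu]; apply/setUP; [left|right];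
    apply/setDP; split=> //; apply/negP.
    move=> /setUP [N1u|/set1P ux]; last by rewrite ux Nx in Nu.
    by rewrite (subsetP (closed_nbhdS sE1 (subsetUl _ _)) _ N1u) in Nu.
  by move=> N2u; rewrite (subsetP (closed_nbhdS sE2 (subsetUr _ _)) _ N2u) in Nu.
have W1x : x \notin W1 by rewrite in_setD in_setU set11 orbT.
have W2y : y \notin W2 by rewrite in_setD (subsetP (subset_closed_nbhd _ _) _ D2y).
apply: contra (contains_copyS sW) _; apply/negP.
by case/(contains_copy_join graphF domF disjV graph1 graph2 V1x V2y (subsetDl _ _) (subsetDl _ _)
           W1x W2y); apply/negP.
Qed.

Lemma quotient_endpoint : q1 + q2 <= iotaF VF EF (V1 :|: V2) E ->
  exists v fc w ET a, [/\ pure_decomp VF EF q1 V1 E1 v fc w ET, a < q1 & x = v a].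
Proof.
move=> lb; have [/VqP [a lt_a ->]|Vqx] := boolP (x \in [set v1 (nat_of_ord i) | i : 'I_q1]).
  by exists v1, fc1, w1, ET1, a.
case: (isolate_off_quotient graphF domF kF dec1 V1x Vqx) => [[q1_1 copy]|[D1 [sD1 cD1 iso1]]].
  have [v [fc [w [ET [dec x_eq]]]]] := decomp_recentre graphF domF kF dec1 q1_1 V1x Vqx copy.
  by exists v, fc, w, ET, 0; rewrite q1_1.
by have := iotaF_join_lt sD1 cD1 iso1; rewrite ltnNge lb.
Qed.
End JoinIota.

Unset Implicit Arguments.

Theorem lemma3p6 (T TF : finType) (VF : {set TF}) (EF : {set {set TF}})
  (k m1 m2 : nat) (V1 V2 : {set T}) (E1 E2 : {set {set T}}) (x y : T) :
  3 <= k -> is_graph VF EF -> #|EF| = k -> gamma_one VF EF ->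
  pure_special VF EF m1 V1 E1 -> pure_special VF EF m2 V2 E2 ->
  [disjoint V1 & V2] -> x \in V1 -> y \in V2 ->
  let V := V1 :|: V2 in
  let E := E1 :|: E2 :|: [set [set x; y]] in
  let m := #|E| in
  iotaF VF EF V E * (k + 2) = m + 1 ->
  special VF EF m V E.
Proof.
move=> kF graphF cardEF domF; subst k.
move=> [_ _ /special_constr0_decomp [v1 [fc1 [w1 [ET1 dec1]]]]].
move=> [_ _ /special_constr0_decomp [v2 [fc2 [w2 [ET2 dec2]]]]] disjV V1x V2y V E m iotaE.
set q1 := m1.+1 %/ _ in dec1; set q2 := m2.+1 %/ _ in dec2.
have lb := iotaF_join_ge graphF dec1 dec2 disjV V1x V2y iotaE.
have [v1' [fc1' [w1' [ET1' [a [dec1' lt_a xa]]]]]] :=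
  quotient_endpoint graphF domF kF dec1 dec2 disjV V1x V2y lb.
have disjV' : [disjoint V2 & V1] by rewrite disjoint_sym.
have lb' := lb; rewrite addnC setUC (setUC E1) [[set x; y]]setUC in lb'.
have [v2' [fc2' [w2' [ET2' [b [dec2' lt_b yb]]]]]] :=
  quotient_endpoint graphF domF kF dec2 dec1 disjV' V2y V1x lb'.
have dec := pure_decomp_join dec1' dec2' disjV lt_a lt_b; rewrite -xa -yb in dec.
have iota_eq : iotaF VF EF V E = q1 + q2.
  by apply/eqP; rewrite eqn_leq lb (iotaF_le_q graphF domF kF dec).
by apply: special_of_decomp dec _; rewrite -[m.+1]addn1 -iotaE iota_eq.
Qed.
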